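(* Let $p\ge 3$ be a prime, let $r=\lfloor\sqrt{p}\rfloor$ and $s=\lfloor\frac{p-2}{r}\rfloor$, and let $t$ be any integer with $0\le t\le p-r$. Then the set $$\{(x,x):x\in\mathbb{F}_p\}\ \cup\ \big([t,t+r-1]\times\{0,r,2r,\ldots,sr,p-1\}\big)\subseteq\mathbb{F}_p^2$$ is a $1$-blocking set in $\mathbb{F}_p^2$, i.e., it meets every affine line of $\mathbb{F}_p^2$ in at least one point.
   Context: $\mathbb{F}_p$ is identified with $\{0,1,\ldots,p-1\}$ with the ordering inherited from $\mathbb{Z}$; for integers $m\le n$, $[m,n]$ denotes $\{m,m+1,\ldots,n\}$ (viewed as elements of $\mathbb{F}_p$). An affine line in $\mathbb{F}_p^2$ is a set $\{\mathbf{a}+\lambda\mathbf{v}:\lambda\in\mathbb{F}_p\}$ with $\mathbf{v}\neq\mathbf{0}$. *)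

From mathcomp Require Import all_boot all_algebra.
Set Implicit Arguments. Unset Strict Implicit. Unset Printing Implicit Defensive.
Import GRing.Theory.
Local Open Scope ring_scope.

Definition on_line (p : nat) (a v : 'F_p * 'F_p) (z : 'F_p * 'F_p) : Prop :=
  exists lam : 'F_p, z = (a.1 + lam * v.1, a.2 + lam * v.2).

Definition blk_set (p r s t : nat) (z : 'F_p * 'F_p) : Prop :=
  z.1 = z.2 \/
  ((exists i : nat, (t <= i <= t + r - 1)%N /\ z.1 = i%:R) /\
   ((exists k : nat, (k <= s)%N /\ z.2 = (k * r)%:R) \/ z.2 = (p - 1)%:R)).

Definition blocking1 (p : nat) (B : 'F_p * 'F_p -> Prop) : Prop :=
  forall a v : 'F_p * 'F_p, v != (0, 0) ->
    exists z, on_line a v z /\ B z.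
Arguments blk_set : clear implicits.
Arguments blocking1 : clear implicits.

From mathcomp Require Import all_boot all_algebra.
From mathcomp Require Import zify ring.
Import GRing.Theory.

(* A line whose direction is not parallel to (1, 1) meets the diagonal, so
   only the lines y = x + c remain.  These are met by the grid part: every
   residue c is a difference y - x with x in [t, t + r - 1] and y in
   {0, r, ..., s r, p - 1}, since the r consecutive values of x fill the gaps
   between consecutive multiples of r (and p - 1 covers the last residue).
   Only r >= 1 and (p - 2) < (s + 1) r are needed. *)

Definition grid_rows (p r s y : nat) : Prop :=
  (exists k, (k <= s)%N /\ y = (k * r)%N) \/ y = (p - 1)%N.

Lemma grid_differences_cover (p r s t n : nat) :
  (0 < r)%N -> (0 < p)%N -> (p - 2 < s.+1 * r)%N ->
  exists x y : nat, (t <= x <= t + r - 1)%N /\ grid_rows p r s y /\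
    (x + n = y %[mod p])%N.
Proof.
move=> r_gt0 p_gt0 ltps.
set d := ((n + t + r) %% p)%N.
have ltdp : (d < p)%N by exact: ltn_pmod.
have [d0 | d_gt0] := posnP d.
  exists (t + r - 1)%N, (p - 1)%N; split; first lia.
  split; first by right.
  apply/eqP; rewrite -(eqn_modDr 1).
  have -> : (t + r - 1 + n + 1 = n + t + r)%N by lia.
  have -> : (p - 1 + 1 = p)%N by lia.
  by rewrite modnn -/d d0.
have [q [j [ltjr ed]]] : exists q j, (j < r)%N /\ d.-1 = (q * r + j)%N.
  by exists (d.-1 %/ r), (d.-1 %% r); split; [exact: ltn_pmod | exact: divn_eq].
exists (t + r - 1 - j)%N, (q * r)%N; split; first lia.
split.
  left; exists q; split=> //.
  by rewrite -ltnS -(ltn_pmul2r r_gt0); lia.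
apply/eqP; rewrite -(eqn_modDr j.+1).
have -> : (q * r + j.+1 = d)%N by lia.
have -> : (t + r - 1 - j + n + j.+1 = n + t + r)%N by lia.
by rewrite modn_mod.
Qed.

Local Open Scope ring_scope.

Lemma natr_Fp_congr {p m n : nat} :
  prime p -> (m = n %[mod p])%N -> (m%:R : 'F_p) = n%:R.
Proof. by move=> pp emn; rewrite -(Fp_nat_mod pp m) emn Fp_nat_mod. Qed.

Lemma line_meets_diagonal {p : nat} (a v : 'F_p * 'F_p) :
  v.1 != v.2 -> exists z, on_line a v z /\ z.1 = z.2.
Proof.
move=> nv; set lam := (a.2 - a.1) / (v.1 - v.2).
exists (a.1 + lam * v.1, a.2 + lam * v.2); split; first by exists lam.
by rewrite /= /lam; field; rewrite subr_eq0.
Qed.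

Lemma on_diagonal_direction_line {p : nat} (a : 'F_p * 'F_p) (w x : 'F_p) :
  w != 0 -> on_line a (w, w) (x, x + (a.2 - a.1)).
Proof.
by move=> w0; exists ((x - a.1) / w); congr pair => /=; field.
Qed.

Theorem lemma1 (p r t : nat) :
  prime p -> (3 <= p)%N ->
  (r * r <= p < r.+1 * r.+1)%N ->
  (t <= p - r)%N ->
  blocking1 p (blk_set p r ((p - 2) %/ r) t).
Proof.
move=> pp p3 /andP[_ ltpr] _ a [v1 v2] v0.
have r_gt0 : (0 < r)%N by case: r ltpr => //; lia.
have [ev | nv] := eqVneq v1 v2; last first.
  by have [z [za zd]] := line_meets_diagonal a (v1, v2) nv; exists z; split; [|left].
subst v2.
have v1_neq0 : v1 != 0 by apply: contraNneq v0 => ->.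
have [x [y [xI [yR exy]]]] := grid_differences_cover _ _ _ t (val (a.2 - a.1))
  r_gt0 (prime_gt0 pp) (ltn_ceil (p - 2) r_gt0).
exists (x%:R, y%:R); split.
  by rewrite -(natr_Fp_congr pp exy) natrD natr_Zp; exact: on_diagonal_direction_line.
by right; split; [exists x | case: yR => [[k [ks ->]] | ->]; [left; exists k | right]].
Qed.
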